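(* Let $i\in\{1,2,3',3'',4\}$. For every $G\in\mathcal{G}_i$ there exists a finite topology $\tau$ on $V(G)$ such that $G_i(\tau)\cong G$ and $m_\tau(x)\ne m_\tau(y)$ for all distinct $x,y\in V(G)$.
   Context: A finite topology $\tau$ on a finite set $X$ is a family of subsets of $X$ (open sets) containing $\emptyset,X$ and closed under unions and intersections; complements of open sets are closed. $m_\tau(x)$ is the intersection of all open sets containing $x$. Separation of distinct $x,y$: $T_1$-separated if there are open $U_x,U_y$ with $x\in U_x\not\ni y$, $y\in U_y\not\ni x$; $T_2$-separated if they have disjoint open neighborhoods; with (a): exist closed $J$, open $U_J,U_y$, $x\in J\subseteq U_J$, $y\in U_y$, $U_J\cap U_y=\emptyset$, and (b): exist closed $K$, open $U_x,U_K$, $x\in U_x$, $y\in K\subseteq U_K$, $U_x\cap U_K=\emptyset$: $T_{3'}$-separated if (a) or (b), $T_{3''}$-separated if (a) and (b); $T_4$-separated if there exist closed $J\ni x$, $K\ni y$ and disjoint open $U_J\supseteq J$, $U_K\supseteq K$. $G_i(\tau)$ is the simple graph on $X$ where distinct $x,y$ are adjacent iff not $T_i$-separated; $\mathcal{G}_i$ is the class of graphs isomorphic to some $G_i(\tau)$ with $\tau$ a finite topology. *)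

From mathcomp Require Import all_boot.
Set Implicit Arguments. Unset Strict Implicit. Unset Printing Implicit Defensive.

(* A finite topology on T: a family of subsets containing set0 and setT,
   closed under (binary, hence all finite) unions and intersections. *)
Definition is_topology (T : finType) (tau : {set {set T}}) : Prop :=
  [/\ set0 \in tau, setT \in tau,
      (forall U V, U \in tau -> V \in tau -> U :|: V \in tau) &
      (forall U V, U \in tau -> V \in tau -> U :&: V \in tau)].

Definition is_open (T : finType) (tau : {set {set T}}) (U : {set T}) : bool := U \in tau.
Definition is_closed (T : finType) (tau : {set {set T}}) (C : {set T}) : bool := (~: C) \in tau.

Definition mset (T : finType) (tau : {set {set T}}) (x : T) : {set T} :=
  \bigcap_(U in tau | x \in U) U.

Section Sep.
Variables (T : finType) (tau : {set {set T}}).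

Definition T1_sep (x y : T) : bool :=
  [exists Ux : {set T}, exists Uy : {set T},
    [&& is_open tau Ux, is_open tau Uy, x \in Ux, y \notin Ux, y \in Uy & x \notin Uy]].

Definition T2_sep (x y : T) : bool :=
  [exists Ux : {set T}, exists Uy : {set T},
    [&& is_open tau Ux, is_open tau Uy, x \in Ux, y \in Uy & Ux :&: Uy == set0]].

Definition T3a_sep (x y : T) : bool :=
  [exists J : {set T}, exists UJ : {set T}, exists Uy : {set T},
    [&& is_closed tau J, is_open tau UJ, is_open tau Uy, x \in J, J \subset UJ,
        y \in Uy & UJ :&: Uy == set0]].

Definition T3b_sep (x y : T) : bool :=
  [exists K : {set T}, exists Ux : {set T}, exists UK : {set T},
    [&& is_closed tau K, is_open tau Ux, is_open tau UK, x \in Ux, y \in K,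
        K \subset UK & Ux :&: UK == set0]].

Definition T3'_sep (x y : T) : bool := T3a_sep x y || T3b_sep x y.
Definition T3''_sep (x y : T) : bool := T3a_sep x y && T3b_sep x y.

Definition T4_sep (x y : T) : bool :=
  [exists J : {set T}, exists K : {set T}, exists UJ : {set T}, exists UK : {set T},
    [&& is_closed tau J, is_closed tau K, x \in J, y \in K, is_open tau UJ,
        is_open tau UK, J \subset UJ, K \subset UK & UJ :&: UK == set0]].
End Sep.

Inductive sep_index := i1 | i2 | i3' | i3'' | i4.

Definition separated (i : sep_index) (T : finType) (tau : {set {set T}}) : rel T :=
  match i with
  | i1 => T1_sep tau
  | i2 => T2_sep tau
  | i3' => T3'_sep tau
  | i3'' => T3''_sep tau
  | i4 => T4_sep tau
  end.

Definition sep_graph (i : sep_index) (T : finType) (tau : {set {set T}}) : rel T :=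
  fun x y => (x != y) && ~~ separated i tau x y.

Definition simple_graph (T : finType) (e : rel T) : Prop := symmetric e /\ irreflexive e.

Definition graph_iso (T1 T2 : finType) (e1 : rel T1) (e2 : rel T2) : Prop :=
  exists f : T1 -> T2, bijective f /\ forall x y, e1 x y = e2 (f x) (f y).

Definition in_class (i : sep_index) (T : finType) (e : rel T) : Prop :=
  exists (X : finType) (tau : {set {set X}}), is_topology tau /\ graph_iso (sep_graph i tau) e.

From mathcomp Require Import all_boot.

Set Implicit Arguments. Unset Strict Implicit. Unset Printing Implicit Defensive.

(* A finite topology is the family of down-sets of its specialization preorder
   (x <= y iff x \in m(y)), and m(x) = m(y) exactly when x and y are equivalent
   under it.  Pull the topology back to the vertex set along the isomorphism
   and break every equivalence class into a chain using an injective rank: the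
   down-sets of the resulting partial order form a topology with pairwise
   distinct minimal neighbourhoods.  Separating witnesses move back and forth
   between the two spaces by preimages in one direction and by down-closures of
   open sets and up-closures of closed sets in the other; this works because
   every class has a least and a greatest element in the refined order.  Hence
   each T_i-separation relation, and with it the graph G_i, is unchanged. *)

Section Downsets.
Variables (T : finType) (R : rel T).

Definition downsets : {set {set T}} :=
  [set U : {set T} | [forall a in U, forall b, R b a ==> (b \in U)]].

Lemma downsetsP (U : {set T}) :
  reflect (forall a b, a \in U -> R b a -> b \in U) (U \in downsets).
Proof.
rewrite inE; apply: (iffP forall_inP) => [H a b aU | H a aU].
- by move/forallP/(_ b)/implyP: (H a aU).
- by apply/forallP => b; apply/implyP; apply: H.
Qed.

Lemma downsets_closed_up (J : {set T}) a b :
  is_closed downsets J -> a \in J -> R a b -> b \in J.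
Proof.
move=> /downsetsP cJ aJ Rab; apply/negPn/negP => bJ.
by have := cJ b a; rewrite !inE aJ bJ => /(_ isT Rab).
Qed.

Lemma downsets_topology : is_topology downsets.
Proof.
split; [by apply/downsetsP => a b; rewrite inE | by apply/downsetsP => a b; rewrite inE | |].
- move=> U V /downsetsP HU /downsetsP HV; apply/downsetsP => a b.
  by rewrite !inE => /orP [aU | aV] Rba; [rewrite (HU a b) | rewrite (HV a b) ?orbT].
- move=> U V /downsetsP HU /downsetsP HV; apply/downsetsP => a b.
  by rewrite !inE => /andP [aU aV] Rba; rewrite (HU a b) ?(HV a b).
Qed.

End Downsets.

Section Specialization.
Variables (X : finType) (tau : {set {set X}}).

Definition specialization : rel X := fun x y => x \in mset tau y.

Lemma specializationP x y :
  reflect (forall U, U \in tau -> y \in U -> x \in U) (specialization x y).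
Proof.
apply: (iffP bigcapP) => [H U Ut yU | H U /andP [Ut yU]]; last exact: H.
by apply: H; rewrite Ut.
Qed.

Lemma specialization_refl : reflexive specialization.
Proof. by move=> x; apply/specializationP. Qed.

Lemma specialization_trans : transitive specialization.
Proof.
move=> y x z /specializationP Hxy /specializationP Hyz.
by apply/specializationP => U Ut zU; apply: Hxy (Hyz U Ut zU).
Qed.

Hypothesis top : is_topology tau.

Lemma mset_open x : mset tau x \in tau.
Proof.
case: top => _ tau_setT _ tau_setI.
by apply: (big_ind (fun S => S \in tau)) => // U /andP [].
Qed.

Lemma topology_downsets : tau = downsets specialization.
Proof.
case: top => tau0 _ tauU _.
apply/setP => U; apply/idP/downsetsP => [Ut a b aU /specializationP | downU].
  by apply.
have -> : U = \bigcup_(y in U) mset tau y.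
  apply/setP => x; apply/idP/bigcupP => [xU | [y yU xy]]; last exact: downU xy.
  by exists x => //; apply: specialization_refl.
by apply: (big_ind (fun S => S \in tau)) => // y _; apply: mset_open.
Qed.

Lemma T1_sep_specialization x y :
  T1_sep tau x y = ~~ specialization x y && ~~ specialization y x.
Proof.
apply/idP/andP => [/existsP [Ux /existsP [Uy /and5P [oUx oUy xUx yUx /andP [yUy xUy]]]]
                  | [nxy nyx]].
  split; apply/negP => /specializationP.
  - by move/(_ Uy oUy yUy); apply/negP.
  - by move/(_ Ux oUx xUx); apply/negP.
apply/existsP; exists (mset tau x); apply/existsP; exists (mset tau y).
by rewrite /is_open !mset_open -!/(specialization _ _) !specialization_refl nxy nyx.
Qed.

End Specialization.

Lemma specialization_downsets (T : finType) (R : rel T) :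
  reflexive R -> transitive R -> specialization (downsets R) =2 R.
Proof.
move=> R_refl R_trans b a; apply/specializationP/idP => [|Rba U /downsetsP downU aU].
  have down_a : [set z | R z a] \in downsets R.
    by apply/downsetsP => c d; rewrite !inE => Rca Rdc; apply: R_trans Rdc Rca.
  by move/(_ _ down_a); rewrite !inE R_refl; apply.
exact: downU Rba.
Qed.

Lemma mset_downsets_inj (T : finType) (R : rel T) :
  reflexive R -> transitive R -> antisymmetric R -> injective (mset (downsets R)).
Proof.
move=> R_refl R_trans R_anti a b Eab.
have R_of_eq c d : mset (downsets R) c = mset (downsets R) d -> R c d.
  move=> Ecd; rewrite -(specialization_downsets R_refl R_trans) /specialization -Ecd.
  exact: specialization_refl.
by apply: R_anti; rewrite !R_of_eq.
Qed.

Section LexRefinement.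
Variables (T : finType) (R : rel T).
Hypotheses (R_refl : reflexive R) (R_trans : transitive R).

Definition lex_refine : rel T := fun a b => R a b && (R b a ==> (pickle a <= pickle b)).

Lemma lex_refine_sub a b : lex_refine a b -> R a b.
Proof. by case/andP. Qed.

Lemma lex_refine_refl : reflexive lex_refine.
Proof. by move=> a; rewrite /lex_refine R_refl leqnn. Qed.

Lemma lex_refine_trans : transitive lex_refine.
Proof.
move=> b a c /andP [Rab pab] /andP [Rbc pbc].
rewrite /lex_refine (R_trans Rab Rbc); apply/implyP => Rca.
rewrite (R_trans Rbc Rca) in pab; rewrite (R_trans Rca Rab) in pbc.
exact: leq_trans pab pbc.
Qed.

Lemma lex_refine_anti : antisymmetric lex_refine.
Proof.
move=> a b /andP [/andP [Rab pab] /andP [Rba pba]].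
rewrite Rba /= in pab; rewrite Rab /= in pba.
by apply: (pcan_inj (@pickleK T)); apply/eqP; rewrite eqn_leq pab pba.
Qed.

Lemma lex_refine_incomparable a b :
  ~~ lex_refine a b && ~~ lex_refine b a = ~~ R a b && ~~ R b a.
Proof.
by rewrite /lex_refine; case: (R a b) (R b a) => [] [] //=; rewrite -negb_or leq_total.
Qed.

Lemma exists_lex_min t0 : exists2 t, R t t0 & forall v, R t0 v -> lex_refine t v.
Proof.
pose P t := R t t0 && R t0 t.
have Pt0 : P t0 by rewrite /P R_refl.
case: (arg_minnP (@pickle T) Pt0) => t /andP [Rtt0 Rt0t] t_min.
exists t => // v Rt0v; rewrite /lex_refine (R_trans Rtt0 Rt0v); apply/implyP => Rvt.
by apply: t_min; rewrite /P Rt0v (R_trans Rvt Rtt0).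
Qed.

Lemma exists_lex_max t0 : exists2 t, R t0 t & forall j, R j t0 -> lex_refine j t.
Proof.
pose P t := R t t0 && R t0 t.
have Pt0 : P t0 by rewrite /P R_refl.
case: (arg_maxnP (@pickle T) Pt0) => t /andP [Rtt0 Rt0t] t_max.
exists t => // j Rjt0; rewrite /lex_refine (R_trans Rjt0 Rt0t); apply/implyP => Rtj.
by apply: t_max; rewrite /P Rjt0 (R_trans Rt0t Rtj).
Qed.

End LexRefinement.

Section SeparationTransfer.
Context {A B : finType} {tauA : {set {set A}}} {tauB : {set {set B}}}.
Context {op cl : {set A} -> {set B}}.
Hypothesis op_open : forall U, is_open tauA U -> is_open tauB (op U).
Hypothesis op_disjoint : forall U V,
  is_open tauA U -> is_open tauA V -> U :&: V == set0 -> op U :&: op V == set0.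
Hypothesis cl_closed : forall J, is_closed tauA J -> is_closed tauB (cl J).
Hypothesis cl_sub_op :
  forall J U : {set A}, is_closed tauA J -> J \subset U -> cl J \subset op U.
Context {x y : A} {x' y' : B}.
Hypotheses (x_op : forall S : {set A}, x \in S -> x' \in op S)
           (x_cl : forall S : {set A}, x \in S -> x' \in cl S).
Hypotheses (y_op : forall S : {set A}, y \in S -> y' \in op S)
           (y_cl : forall S : {set A}, y \in S -> y' \in cl S).

Lemma T3a_sep_transfer : T3a_sep tauA x y -> T3a_sep tauB x' y'.
Proof.
case/existsP => J /existsP [UJ /existsP [Uy /and5P [cJ oUJ oUy xJ /and3P [sJ yUy d]]]].
apply/existsP; exists (cl J); apply/existsP; exists (op UJ); apply/existsP; exists (op Uy).
by rewrite cl_closed ?op_open ?x_cl ?y_op ?cl_sub_op ?op_disjoint.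
Qed.

Lemma T3b_sep_transfer : T3b_sep tauA x y -> T3b_sep tauB x' y'.
Proof.
case/existsP => K /existsP [Ux /existsP [UK /and5P [cK oUx oUK xUx /and3P [yK sK d]]]].
apply/existsP; exists (cl K); apply/existsP; exists (op Ux); apply/existsP; exists (op UK).
by rewrite cl_closed ?op_open ?x_op ?y_cl ?cl_sub_op ?op_disjoint.
Qed.

Lemma separated_transfer i : i <> i1 -> separated i tauA x y -> separated i tauB x' y'.
Proof.
case: i => //= _.
- case/existsP => Ux /existsP [Uy /and5P [oUx oUy xUx yUy d]].
  apply/existsP; exists (op Ux); apply/existsP; exists (op Uy).
  by rewrite !op_open ?x_op ?y_op ?op_disjoint.
- by case/orP => [/T3a_sep_transfer | /T3b_sep_transfer] sep; apply/orP; [left | right].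
- by case/andP => /T3a_sep_transfer sa /T3b_sep_transfer sb; apply/andP.
- case/existsP => J /existsP [K /existsP [UJ /existsP [UK
    /and5P [cJ cK xJ yK /and5P [oUJ oUK sJ sK d]]]]].
  apply/existsP; exists (cl J); apply/existsP; exists (cl K);
    apply/existsP; exists (op UJ); apply/existsP; exists (op UK).
  by rewrite !cl_closed ?x_cl ?y_cl ?op_open ?cl_sub_op ?op_disjoint.
Qed.

End SeparationTransfer.

Section RefinedTopology.
Variables (X : finType) (tau : {set {set X}}).
Hypothesis top : is_topology tau.
Variables (T : finType) (h : T -> X).
Hypothesis h_surj : forall x, exists t, h t = x.

Local Notation spec := (specialization tau).
Local Notation R := (relpre h spec).

Definition refined_topology : {set {set T}} := downsets (lex_refine R).
Local Notation tauT := refined_topology.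

Lemma relpre_spec_refl : reflexive R.
Proof. by move=> a; apply: specialization_refl. Qed.

Lemma relpre_spec_trans : transitive R.
Proof. by move=> b a c; apply: specialization_trans. Qed.

Definition down_image (V : {set T}) : {set X} := [set x | [exists v in V, spec x (h v)]].
Definition up_image (J : {set T}) : {set X} := [set x | [exists j in J, spec (h j) x]].

Lemma down_image_mem a (V : {set T}) : a \in V -> h a \in down_image V.
Proof.
by move=> aV; rewrite inE; apply/exists_inP; exists a => //; apply: specialization_refl.
Qed.

Lemma up_image_mem a (J : {set T}) : a \in J -> h a \in up_image J.
Proof.
by move=> aJ; rewrite inE; apply/exists_inP; exists a => //; apply: specialization_refl.
Qed.

Lemma down_image_open (V : {set T}) : is_open tau (down_image V).
Proof.
rewrite /is_open (topology_downsets top); apply/downsetsP => x y.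
rewrite !inE => /exists_inP [v vV xv] yx; apply/exists_inP; exists v => //.
exact: specialization_trans yx xv.
Qed.

Lemma up_image_closed (J : {set T}) : is_closed tau (up_image J).
Proof.
rewrite /is_closed (topology_downsets top); apply/downsetsP => x y.
rewrite !inE => /exists_inP nx yx; apply/exists_inP => -[j jJ jy].
by apply: nx; exists j => //; apply: specialization_trans jy yx.
Qed.

Lemma down_image_disjoint (V W : {set T}) : is_open tauT V -> is_open tauT W ->
  V :&: W == set0 -> down_image V :&: down_image W == set0.
Proof.
move=> /downsetsP downV /downsetsP downW /eqP VW; apply/eqP/setP => x.
rewrite !inE; apply/negP => /andP [/exists_inP [v vV xv] /exists_inP [w wW xw]].
have [t0 ht0] := h_surj x; rewrite -ht0 in xv xw.
have [t _ t_min] := exists_lex_min relpre_spec_refl relpre_spec_trans t0.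
have tV : t \in V := downV v t vV (t_min v xv).
have tW : t \in W := downW w t wW (t_min w xw).
have : t \in V :&: W by rewrite inE tV tW.
by rewrite VW inE.
Qed.

Lemma up_image_sub_down_image (J V : {set T}) :
  is_closed tauT J -> J \subset V -> up_image J \subset down_image V.
Proof.
move=> cJ /subsetP JV; apply/subsetP => x; rewrite !inE => /exists_inP [j jJ jx].
have [t0 ht0] := h_surj x; rewrite -ht0 in jx *.
have [t t0t t_max] := exists_lex_max relpre_spec_refl relpre_spec_trans t0.
apply/exists_inP; exists t => //; apply: JV.
exact: downsets_closed_up cJ jJ (t_max j jx).
Qed.

Lemma preimset_open (U : {set X}) : is_open tau U -> is_open tauT (h @^-1: U).
Proof.
move=> oU; apply/downsetsP => a b; rewrite !inE => haU /lex_refine_sub.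
by move/specializationP; apply.
Qed.

Lemma preimset_closed (J : {set X}) : is_closed tau J -> is_closed tauT (h @^-1: J).
Proof. by rewrite /is_closed -preimsetC; apply: preimset_open. Qed.

Lemma preimset_disjoint (U V : {set X}) : U :&: V == set0 -> h @^-1: U :&: h @^-1: V == set0.
Proof. by rewrite -preimsetI => /eqP ->; rewrite preimset0. Qed.

Lemma T1_sep_refined a b : T1_sep tauT a b = T1_sep tau (h a) (h b).
Proof.
have lex_refl := lex_refine_refl relpre_spec_refl.
have lex_trans := lex_refine_trans relpre_spec_trans.
rewrite /refined_topology !T1_sep_specialization //; last exact: downsets_topology.
by rewrite !(specialization_downsets lex_refl lex_trans) lex_refine_incomparable.
Qed.

Lemma separated_refined i a b : separated i tauT a b = separated i tau (h a) (h b).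
Proof.
(* Down-closures need not preserve non-membership, so T1 goes through the
   specialization preorder instead of separated_transfer. *)
have [-> | ne1] : i = i1 \/ i <> i1 by case: i; [left | right..].
  exact: T1_sep_refined.
apply/idP/idP => sep.
- apply: (separated_transfer _ down_image_disjoint _ up_image_sub_down_image
    (@down_image_mem a) (@up_image_mem a) (@down_image_mem b) (@up_image_mem b) ne1 sep).
  + by move=> V _; apply: down_image_open.
  + by move=> J _; apply: up_image_closed.
- apply: (separated_transfer preimset_open _ preimset_closed _ _ _ _ _ ne1 sep).
  + by move=> U V _ _; apply: preimset_disjoint.
  + by move=> J U _; apply: preimsetS.
  all: by move=> S; rewrite inE.
Qed.

Lemma mset_refined_inj : injective (mset tauT).
Proof.
exact: mset_downsets_inj (lex_refine_refl relpre_spec_refl)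
  (lex_refine_trans relpre_spec_trans) (@lex_refine_anti _ _).
Qed.

End RefinedTopology.

Theorem lemma3p4 (i : sep_index) (T : finType) (e : rel T) :
  simple_graph e -> in_class i e ->
  exists tau : {set {set T}},
    [/\ is_topology tau, graph_iso (sep_graph i tau) e &
        forall x y : T, x != y -> mset tau x != mset tau y].
Proof.
move=> _ [X [tau [top [g [[h gK hK] g_iso]]]]].
have h_surj x : exists t, h t = x by exists (g x); rewrite gK.
exists (refined_topology tau h); split.
- exact: downsets_topology.
- exists id; split; first by exists id.
  move=> a b; rewrite -{2}(hK a) -{2}(hK b) -g_iso /sep_graph.
  by rewrite (separated_refined top h_surj) (inj_eq (can_inj hK)).
- by move=> x y; apply: contra_neq; apply: mset_refined_inj.
Qed.
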